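(* Let $q\in\,]0,1[$, $\omega\ge 0$, let $I$ be an interval containing $\omega_0:=\omega/(1-q)$, let $c\in I$, and let $f:I\to\mathbb{R}$ be Hahn symmetric integrable on $I$. Suppose $f(t)\ge 0$ for all $t\in\{\sigma^{2n+1}(c):n\in\mathbb{N}_0\}\cup\{\omega_0\}$. 1. If $c\ge\omega_0$, then $\int_{\omega_0}^c f(t)\,\tilde d_{q,\omega}t\ge 0$. 2. If $c<\omega_0$, then $\int_c^{\omega_0}f(t)\,\tilde d_{q,\omega}t\ge 0$.
   Context: $\sigma(t):=qt+\omega$, $\sigma^{-1}(t):=q^{-1}(t-\omega)$, $\sigma^k$ is the $k$-fold composition of $\sigma$. Hahn symmetric integral: for $x\in I$, $\int_{\omega_0}^x f(t)\,\tilde d_{q,\omega}t:=(\sigma^{-1}(x)-\sigma(x))\sum_{n=0}^\infty q^{2n+1}f(\sigma^{2n+1}(x))$, and for $a,b\in I$, $\int_a^b f\,\tilde d_{q,\omega}t:=\int_{\omega_0}^b f\,\tilde d_{q,\omega}t-\int_{\omega_0}^a f\,\tilde d_{q,\omega}t$, provided the series converge. $f$ is Hahn symmetric integrable on $I$ if these series converge for every point of $I$. *)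

From Stdlib Require Import Reals.
From Coquelicot Require Import Coquelicot.
Open Scope R_scope.

Definition sigma (q omega t : R) : R := q * t + omega.
Definition sigma_inv (q omega t : R) : R := / q * (t - omega).
Definition sigma_iter (q omega : R) (k : nat) (t : R) : R :=
  Nat.iter k (sigma q omega) t.

Definition omega0 (q omega : R) : R := omega / (1 - q).

Definition hahn_sym_term (q omega : R) (f : R -> R) (x : R) (n : nat) : R :=
  q ^ (2 * n + 1) * f (sigma_iter q omega (2 * n + 1) x).

(* int_{omega0}^x f(t) ~d_{q,omega} t *)
Definition hahn_sym_int0 (q omega : R) (f : R -> R) (x : R) : R :=
  (sigma_inv q omega x - sigma q omega x) * Series (hahn_sym_term q omega f x).

Definition hahn_sym_int (q omega : R) (f : R -> R) (a b : R) : R :=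
  hahn_sym_int0 q omega f b - hahn_sym_int0 q omega f a.

Definition is_interval (I : R -> Prop) : Prop :=
  forall x y z, I x -> I z -> x <= y -> y <= z -> I y.

Definition hahn_sym_integrable (q omega : R) (I : R -> Prop) (f : R -> R) : Prop :=
  forall x, I x -> ex_series (hahn_sym_term q omega f x).

From Pilot Require Import Defs.
From Stdlib Require Import Reals Lra.
From Coquelicot Require Import Coquelicot.
Open Scope R_scope.

(* The step length [sigma_inv x - sigma x] equals [(x - omega0) (1/q - q)], so it
   vanishes at the fixed point [omega0] of [sigma] (the integral based there is 0) and
   has the sign of [x - omega0]; the series factor at [c] has nonnegative terms.
   Each integral is therefore a product of nonnegative factors. *)

Lemma Series_const0 : Series (fun _ : nat => 0) = 0.
Proof.
  transitivity (Series (fun _ : nat => 0 * 1)).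
  - apply Series_ext; intros; ring.
  - rewrite Series_scal_l; ring.
Qed.

Lemma Series_nonneg (a : nat -> R) :
  (forall n, 0 <= a n) -> ex_series a -> 0 <= Series a.
Proof.
  intros Ha Hex. rewrite <- Series_const0.
  apply Series_le; [intros n; split; [lra | apply Ha] | exact Hex].
Qed.

Lemma Rinv_sub_self_gt0 (q : R) : 0 < q < 1 -> 0 < / q - q.
Proof.
  intros Hq. assert (1 < / q) by (rewrite <- Rinv_1; apply Rinv_lt_contravar; lra).
  lra.
Qed.

Lemma sigma_inv_sub_sigma (q omega x : R) : 0 < q < 1 ->
  Defs.sigma_inv q omega x - Defs.sigma q omega x = (x - omega0 q omega) * (/ q - q).
Proof.
  intros Hq. unfold Defs.sigma_inv, Defs.sigma, omega0. field. lra.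
Qed.

Lemma hahn_sym_int0_omega0 (q omega : R) (f : R -> R) : 0 < q < 1 ->
  hahn_sym_int0 q omega f (omega0 q omega) = 0.
Proof.
  intros Hq. unfold hahn_sym_int0. rewrite sigma_inv_sub_sigma by exact Hq. ring.
Qed.

Lemma Series_hahn_sym_term_nonneg (q omega : R) (f : R -> R) (x : R) :
  0 < q -> (forall n, 0 <= f (sigma_iter q omega (2 * n + 1) x)) ->
  ex_series (hahn_sym_term q omega f x) ->
  0 <= Series (hahn_sym_term q omega f x).
Proof.
  intros Hq Hf Hex. apply Series_nonneg; [intros n | exact Hex].
  apply Rmult_le_pos; [apply pow_le; lra | apply Hf].
Qed.

Theorem corollary2p18 (q omega : R) (I : R -> Prop) (c : R) (f : R -> R) :
  0 < q < 1 -> 0 <= omega ->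
  is_interval I -> I (omega0 q omega) -> I c ->
  hahn_sym_integrable q omega I f ->
  (forall n : nat, 0 <= f (sigma_iter q omega (2 * n + 1) c)) ->
  0 <= f (omega0 q omega) ->
  (omega0 q omega <= c -> 0 <= hahn_sym_int q omega f (omega0 q omega) c) /\
  (c < omega0 q omega -> 0 <= hahn_sym_int q omega f c (omega0 q omega)).
Proof.
  intros Hq _ _ _ Hc Hint Hf _.
  pose proof (Rinv_sub_self_gt0 q Hq) as Hstep.
  pose proof (Series_hahn_sym_term_nonneg q omega f c (proj1 Hq) Hf (Hint c Hc)) as HS.
  unfold hahn_sym_int. rewrite hahn_sym_int0_omega0 by exact Hq.
  unfold hahn_sym_int0. rewrite sigma_inv_sub_sigma by exact Hq.
  split; intros Hcw.
  - rewrite Rminus_0_r. apply Rmult_le_pos; [apply Rmult_le_pos |]; lra.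
  - rewrite Rminus_0_l, !Ropp_mult_distr_l.
    apply Rmult_le_pos; [apply Rmult_le_pos |]; lra.
Qed.
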